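(* Let $K$ be a field with algebraic closure $\overline K$, let $n\ge2$ and $1\le s<n$ be integers, and let $b\ge2$ be an integer. For a degree pattern $\mathbf d=(d_1,\dots,d_s)$ with $d_1\ge\cdots\ge d_s\ge1$, $d_1\ge2$, write $\delta(\mathbf d)=d_1\cdots d_s$, $D_i(\mathbf d)=\binom{d_i+n}{n}-1$ and $\mathbb P^{\mathbf D(\mathbf d)}_{\overline K}=\mathbb P^{D_1(\mathbf d)}_{\overline K}\times\cdots\times\mathbb P^{D_s(\mathbf d)}_{\overline K}$, and let $\mathbf d^{(b)}=(b,1,\dots,1)$. Then for every degree pattern $\mathbf d\ne\mathbf d^{(b)}$ with $\delta(\mathbf d)=b$, $$\dim\mathbb P^{\mathbf D(\mathbf d^{(b)})}_{\overline K}\ge\dim\mathbb P^{\mathbf D(\mathbf d)}_{\overline K}+g(b).$$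
   Context: $g(b)=0$ if $b$ is prime; otherwise $g(b)=\binom{b+n}{n}-\binom{b/\rho+n}{n}-\binom{\rho+n}{n}$, where $\rho$ is the smallest prime dividing $b$. *)

From mathcomp Require Import all_boot all_order all_algebra.
Import GRing.Theory Num.Theory.

Definition degree_pattern (s : nat) (d : seq nat) : bool :=
  [&& size d == s, sorted geq d, all (fun x => 0 < x) d & 2 <= head 0 d].

Definition delta (d : seq nat) : nat := \prod_(x <- d) x.

Definition Dcomp (n di : nat) : int := ('C(di + n, n))%:Z - 1.

(* dim of P^{D_1} x ... x P^{D_s} = D_1 + ... + D_s *)
Definition dimPD (n : nat) (d : seq nat) : int :=
  (\sum_(x <- d) Dcomp n x)%R.

Definition dpat_b (s b : nat) : seq nat := b :: nseq s.-1 1.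

Definition g (n b : nat) : int :=
  if prime b then 0%R
  else (('C(b + n, n))%:Z - ('C(b %/ pdiv b + n, n))%:Z - ('C(pdiv b + n, n))%:Z)%R.

From mathcomp Require Import all_boot all_order all_algebra.
From mathcomp Require Import zify.
Import GRing.Theory Num.Theory.

(* Write f(t) = 'C(t + n, n) and let p be the least prime factor of b.  The
   function f is superadditive in the multiplicative sense,
   f(x) + f(y) <= f(xy) + f(1), so the tail (d_2, ..., d_s) of d may be merged
   into the single factor R = d_2 ... d_s.  A pair (x, y) with xy fixed can be
   spread apart, f(x) + f(y) <= f(a) + f(c) whenever a <= x <= y and ac = xy,
   because n! f(t) = (t+1) ... (t+n) and each factor pair (x+i)(y+i) is
   dominated by (a+i)(c+i).  Applied to (d_1, R) with a = p this gives the
   bound, and R >= 2 since d differs from (b, 1, ..., 1). *)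

Lemma sum_le_of_mul_le a c x y :
  0 < a -> a <= x -> x <= y -> x * y <= a * c -> x + y <= a + c.
Proof.
move=> a_gt0 le_ax le_xy le_mul.
have : a * (x + y) <= a * (a + c) by nia.
by rewrite leq_pmul2l.
Qed.

Lemma ffact_shift_homo n t u : t <= u -> (t + n) ^_ n <= (u + n) ^_ n.
Proof.
move=> le_tu; elim: n => [|n IHn]; first by rewrite !ffactn0.
by rewrite !addnS !ffactSS leq_mul // ltnS leq_add2r.
Qed.

Lemma ffact_shift_mul_le n a c x y :
    0 < a -> a <= x -> x <= y -> a * c = x * y ->
  (x + n) ^_ n * (y + n) ^_ n <= (a + n) ^_ n * (c + n) ^_ n.
Proof.
move=> a_gt0 le_ax le_xy eq_mul.
have le_sum : x + y <= a + c by apply: sum_le_of_mul_le; rewrite ?eq_mul.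
elim: n => [|n IHn]; first by rewrite !ffactn0.
rewrite !addnS !ffactSS mulnACA [X in _ <= X]mulnACA leq_mul //; nia.
Qed.

Lemma binom_exchange n a c x y :
    0 < a -> a <= x -> x <= y -> a * c = x * y ->
  'C(x + n, n) + 'C(y + n, n) <= 'C(a + n, n) + 'C(c + n, n).
Proof.
move=> a_gt0 le_ax le_xy eq_mul.
rewrite -(leq_pmul2r (fact_gt0 n)) !mulnDl !bin_ffact.
apply: sum_le_of_mul_le; rewrite ?ffact_shift_homo //.
- by rewrite ffact_gt0 leq_addl.
- exact: ffact_shift_mul_le.
Qed.

Lemma binom_exchange_pdiv n x y : 1 < x -> 1 < y ->
  'C(x + n, n) + 'C(y + n, n)
    <= 'C(pdiv (x * y) + n, n) + 'C(x * y %/ pdiv (x * y) + n, n).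
Proof.
wlog le_xy : x y / x <= y => [wlog_xy x_gt1 y_gt1 | x_gt1 y_gt1].
  case: (leqP x y) => [le_xy | /ltnW le_yx]; first exact: wlog_xy.
  by rewrite addnC mulnC; apply: wlog_xy.
have xy_gt1 : 1 < x * y by nia.
apply: binom_exchange; rewrite ?pdiv_gt0 //.
- by apply: pdiv_min_dvd; rewrite ?dvdn_mulr.
- by rewrite mulnC divnK ?pdiv_dvd.
Qed.

Lemma binom_superadditive n x y : 0 < x -> 0 < y ->
  'C(x + n, n) + 'C(y + n, n) <= 'C(x * y + n, n) + n.+1.
Proof.
wlog le_xy : x y / x <= y => [wlog_xy x_gt0 y_gt0 | x_gt0 y_gt0].
  case: (leqP x y) => [le_xy | /ltnW le_yx]; first exact: wlog_xy.
  by rewrite addnC mulnC; apply: wlog_xy.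
have -> : n.+1 = 'C(1 + n, n) by rewrite add1n binSn.
rewrite [X in _ <= X]addnC.
by apply: binom_exchange; rewrite ?mul1n.
Qed.

Lemma binom_big_superadditive n (e : seq nat) : all (fun x => 0 < x) e ->
  \sum_(x <- e) 'C(x + n, n) + n.+1
    <= 'C(\prod_(x <- e) x + n, n) + size e * n.+1.
Proof.
elim: e => [|x e IHe] /=.
  by move=> _; rewrite !big_nil add1n binSn add0n mul0n addn0.
case/andP=> x_gt0 e_gt0; rewrite !big_cons.
have prod_gt0 : 0 < \prod_(y <- e) y.
  by rewrite big_seq prodn_cond_gt0 // => y /(allP e_gt0).
have := @binom_superadditive n _ _ x_gt0 prod_gt0; have := IHe e_gt0; lia.
Qed.

Lemma dimPDE n (e : seq nat) :
  dimPD n e = ((\sum_(x <- e) 'C(x + n, n))%:Z - (size e)%:Z)%R.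
Proof.
rewrite /dimPD; elim: e => [|x e IHe]; first by rewrite !big_nil.
by rewrite !big_cons IHe /Dcomp /= PoszD -addn1 PoszD; lia.
Qed.

Lemma sum_binom_nseq1 n k : \sum_(x <- nseq k 1) 'C(x + n, n) = k * n.+1.
Proof.
elim: k => [|k IHk]; first by rewrite big_nil.
by rewrite /= big_cons IHk add1n binSn mulSn.
Qed.

Lemma prod_eq1_nseq (r : seq nat) : \prod_(x <- r) x = 1 -> r = nseq (size r) 1.
Proof.
move/eqP; rewrite prod_nat_seq_eq1 => /allP r1.
by apply/all_pred1P/allP => x /r1.
Qed.

Theorem corollary5p2 (n s b : nat) (d : seq nat) :
  2 <= n -> 1 <= s < n -> 2 <= b ->
  degree_pattern s d -> d != dpat_b s b -> delta d = b ->
  (dimPD n d + g n b <= dimPD n (dpat_b s b))%R.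
Proof.
move=> _ _ _ /and4P[/eqP size_d _ d_gt0 d1_gt1] d_neq.
case: d size_d d_gt0 d1_gt1 d_neq => [|d1 r] size_d //.
move=> /= /andP[_ r_gt0] d1_gt1 d_neq; rewrite /delta big_cons => d_prod; subst b.
set R := \prod_(x <- r) x.
have R_gt0 : 0 < R by rewrite /R big_seq prodn_cond_gt0 // => y /(allP r_gt0).
have R_gt1 : 1 < R.
  rewrite ltn_neqAle R_gt0 andbT; apply: contra_neq d_neq => R1.
  by rewrite /dpat_b -size_d /= -/R -R1 muln1 {1}(prod_eq1_nseq _ (esym R1)).
have not_prime : ~~ prime (d1 * R).
  by apply/primeP => -[_ /(_ d1 (dvdn_mulr _ (dvdnn d1)))] /orP[] /eqP; nia.
have := @binom_big_superadditive n _ r_gt0.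
have := @binom_exchange_pdiv n _ _ d1_gt1 R_gt1.
rewrite -/R !dimPDE /dpat_b /g (negbTE not_prime) /= !big_cons sum_binom_nseq1.
rewrite size_nseq -size_d /=; lia.
Qed.
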